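(* Let $R$ be a full-rank order of rank $n$ in the number field $K=\mathrm{Q}(R)$, let $p$ be a prime and let $a\in\mathbb{Z}_{>0}$ satisfy $0<\operatorname{ord}_p(a)<\operatorname{ord}_p(\delta(R))$. If the ideal $\delta(R)R^\dagger+aR\subseteq R$ is invertible at $p$, then $p\le n$.
   Context: An order is a domain whose additive group is isomorphic to $\mathbb{Z}^n$ ($n$ its rank); $\mathrm{Q}(R)$ is its field of fractions, a number field of degree $n$. For an additive subgroup $I\subseteq K$, the trace dual is $I^\dagger=\{x\in K:\operatorname{Tr}_{K/\mathbb{Q}}(xI)\subseteq\mathbb{Z}\}$. The reduced discriminant $\delta(R)$ is the exponent of the finite abelian group $R^\dagger/R$. For a rational prime $p$, $R_p$ denotes the localization of $R$ at $p$ as a $\mathbb{Z}$-algebra (i.e. $\mathbb{Z}_{(p)}\otimes R$), and a fractional ideal $I$ of $R$ is invertible at $p$ if $IR_p$ is an invertible ideal of $R_p$, i.e. $(IR_p)J=R_p$ for some $R_p$-submodule $J\subseteq K$. *)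

From HB Require Import structures.
From mathcomp Require Import all_boot all_order all_algebra all_field.
Set Implicit Arguments. Unset Strict Implicit. Unset Printing Implicit Defensive.
Import Order.TTheory GRing.Theory Num.Theory.
Local Open Scope ring_scope.

Section NumberField.
Variable K : fieldExtType rat.

Definition trace (x : K) : rat :=
  \tr (passmx.mxof (vbasis {:K}) (vbasis {:K}) (amulr x)).

Definition Zspan n (b : n.-tuple K) (x : K) : Prop :=
  exists z : 'I_n -> int, x = \sum_(i < n) (z i)%:~R *: tnth b i.

Definition full_order (R : K -> Prop) (n : nat) : Prop :=
  [/\ R 1,
      (forall x y, R x -> R y -> R (x * y)) &
      exists b : n.-tuple K, basis_of fullv b /\ (forall x, R x <-> Zspan b x)].

Definition trace_dual (I : K -> Prop) (x : K) : Prop :=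
  forall y, I y -> trace (x * y) \is a Num.int.

(* d is the reduced discriminant delta(R): the exponent of R^dagger / R, i.e.
   the least positive integer killing R^dagger / R *)
Definition kills (R : K -> Prop) (d : nat) : Prop :=
  forall x, trace_dual R x -> R (d%:R * x).
Definition red_disc (R : K -> Prop) (d : nat) : Prop :=
  [/\ (0 < d)%N, kills R d & forall e, (0 < e)%N -> kills R e -> (d <= e)%N].

Definition localize (R : K -> Prop) (p : nat) (x : K) : Prop :=
  exists r (s : nat), [/\ R r, ~~ (p %| s)%N & x = r / s%:R].

Definition prod_set (A B : K -> Prop) (x : K) : Prop :=
  exists m (a b : 'I_m -> K),
    [/\ forall i, A (a i), forall i, B (b i) & x = \sum_(i < m) a i * b i].

Definition submodule (S J : K -> Prop) : Prop :=
  [/\ J 0, (forall x y, J x -> J y -> J (x - y)) &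
      forall s x, S s -> J x -> J (s * x)].

Definition invertible_at (R : K -> Prop) (p : nat) (I : K -> Prop) : Prop :=
  exists J : K -> Prop, submodule (localize R p) J /\
    forall x, prod_set (prod_set I (localize R p)) J x <-> localize R p x.

Definition dual_plus (R : K -> Prop) (d a : nat) (x : K) : Prop :=
  exists u r, [/\ trace_dual R u, R r & x = d%:R * u + a%:R * r].

End NumberField.

From HB Require Import structures.
From mathcomp Require Import all_boot all_order all_algebra all_field.
From mathcomp Require Import zify ring.
Set Implicit Arguments. Unset Strict Implicit. Unset Printing Implicit Defensive.
Import Order.TTheory GRing.Theory Num.Theory.
Local Open Scope ring_scope.

(* Suppose n < p.  Since R_p = (I R_p) J with I = d R^dagger + a R, the unit 1 is a
   finite sum of products x z with x in I and z in J; collecting terms gives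
   1 = d u + a al with d u in R_p, d R^dagger al in R_p and Tr(d u R_p) in pZ_(p),
   the last one because a J lies in R_p while ord_p a < ord_p d.  Writing d u = r / s
   with r in R, every Tr(r^j) is divisible by p, so multiplication by r is nilpotent
   modulo p: an idempotent power of it has trace equal to its rank, which is below p.
   Hence (d u)^m lies in p R_p for some m, and the geometric sum identity
   1 = (d u)^m + a al (1 + d u + ... + (d u)^(m-1)) then puts (d/p) R^dagger in
   R_p and in p^-1 R, hence in R, against the minimality of d = delta(R). *)

Lemma mxtrace_idem (F : fieldType) n (E : 'M[F]_n) :
  E * E = E -> \tr E = (\rank E)%:R.
Proof.
move=> EE; have CB := mulmx_base E.
have BC : row_base E *m col_base E = 1%:M.
  apply: (row_full_inj (col_base_full E)); apply: (row_free_inj (row_base_free E)).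
  by rewrite mulmx1 mulmxA CB -mulmxA CB; exact: EE.
by rewrite -[in LHS]CB mxtrace_mulC BC mxtrace1.
Qed.

Lemma exists_idempotent_power (F : finFieldType) n (A : 'M[F]_n) :
  exists2 m, (0 < m)%N & A ^+ m * A ^+ m = A ^+ m.
Proof.
have [i [j [lt_ij eq_ij]]] : exists i j, (i < j)%N /\ A ^+ i = A ^+ j.
  pose f (k : 'I_#|{: 'M[F]_n}|.+1) := A ^+ k.
  have /injectivePn[i [j neq_ij eq_ij]] : ~~ injectiveb f.
    by apply/injectiveP => /leq_card; rewrite card_ord ltnn.
  case: (ltngtP i j) => [lt_ij|lt_ji|/val_inj ij_eq]; first by exists i, j.
    by exists j, i.
  by rewrite ij_eq eqxx in neq_ij.
set q := (j - i)%N.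
have shift k : (i <= k)%N -> A ^+ (k + q) = A ^+ k.
  move=> le_ik; rewrite -(subnK le_ik) -addnA subnKC; last exact: ltnW.
  by rewrite !exprD eq_ij.
have periodic c k : (i <= k)%N -> A ^+ (k + c * q) = A ^+ k.
  elim: c k => [|c IHc] k le_ik; first by rewrite mul0n addn0.
  by rewrite mulSn addnA IHc ?shift // (leq_trans le_ik) ?leq_addr.
have q_gt0 : (0 < q)%N by rewrite subn_gt0.
exists (i.+1 * q)%N; first by rewrite muln_gt0.
by rewrite -exprD periodic // (leq_trans (leqnSn i)) ?leq_pmulr.
Qed.

Lemma nilpotent_of_trace_powers (F : finFieldType) p n (A : 'M[F]_n) :
  p \in [pchar F] -> (n < p)%N -> (forall j, (0 < j)%N -> \tr (A ^+ j) = 0) ->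
  exists2 m, (0 < m)%N & A ^+ m = 0.
Proof.
move=> charFp lt_np trA0; have [m m_gt0 idemAm] := exists_idempotent_power A.
exists m => //; apply/eqP; rewrite -mxrank_eq0.
have : (p %| \rank (A ^+ m))%N by rewrite (dvdn_pcharf charFp) -mxtrace_idem // trA0.
apply: contraLR; rewrite -lt0n => rk_gt0; rewrite gtnNdvd //.
exact: leq_ltn_trans (rank_leq_row _) lt_np.
Qed.

Section RegularRepresentation.
Variable K : fieldExtType rat.
Local Notation n := (\dim {:K}).
Variable e : n.-tuple K.
Hypothesis e_basis : basis_of fullv e.

Definition regmx (x : K) : 'M[rat]_n := passmx.mxof e e (amulr x).

Lemma regmxE x i j : regmx x i j = coord e j (e`_i * x).
Proof.
by rewrite /regmx /passmx.mxof /lin1_mx mxE /= passmx.vecof_delta lfunE /= mxE.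
Qed.

Lemma regmx_is_linear : linear regmx.
Proof.
move=> c x y; rewrite /regmx -passmx.mxof_linear; congr passmx.mxof.
by apply/lfunP => w; do !rewrite lfunE /=; rewrite mulrDr scalerAr.
Qed.

HB.instance Definition _ := GRing.isSemilinear.Build rat _ _ _ regmx
  (GRing.semilinear_linear regmx_is_linear).

Lemma regmx1 : regmx 1 = 1.
Proof.
rewrite /regmx -idmxE -(passmx.mxof1 (basis_free e_basis)); congr passmx.mxof.
by apply/lfunP => w; rewrite id_lfunE lfunE /= mulr1.
Qed.

Lemma regmxM x y : regmx (x * y) = regmx x * regmx y.
Proof.
rewrite /regmx -mulmxE -(passmx.mxof_comp e e e_basis); congr passmx.mxof.
by apply/lfunP => w; rewrite comp_lfunE !lfunE /= mulrA.
Qed.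

Lemma regmxX x k : regmx (x ^+ k) = regmx x ^+ k.
Proof. by elim: k => [|k IHk]; rewrite ?regmx1 // !exprS regmxM IHk. Qed.

Lemma coord_regmx x : passmx.rVof e x = passmx.rVof e 1 *m regmx x.
Proof. by rewrite /regmx -passmx.rVof_app /amulr ?lfunE /= ?mul1r. Qed.

Lemma trace_regmx x : trace x = \tr (regmx x).
Proof.
have vB : basis_of fullv (vbasis {:K}) := vbasisP _.
rewrite /trace /regmx -[in RHS](comp_lfun1r (amulr x)).
rewrite (passmx.mxof_comp _ _ vB) mxtrace_mulC -(passmx.mxof_comp _ _ e_basis).
by rewrite comp_lfun1l.
Qed.

End RegularRepresentation.

Lemma traceD (K : fieldExtType rat) (x y : K) : trace (x + y) = trace x + trace y.
Proof. by rewrite !(trace_regmx (vbasisP _)) linearD mxtraceD. Qed.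

Lemma trace0 (K : fieldExtType rat) : trace (0 : K) = 0.
Proof. by rewrite (trace_regmx (vbasisP _)) linear0 mxtrace0. Qed.

Lemma trace_natrM (K : fieldExtType rat) k (x : K) : trace (k%:R * x) = k%:R * trace x.
Proof. by rewrite !(trace_regmx (vbasisP _)) !mulr_natl !raddfMn. Qed.

Lemma map_mx_numqK m n (M : 'M[rat]_(m, n)) :
  (forall i j, M i j \is a Num.int) -> map_mx intr (map_mx numq M) = M.
Proof. by move=> M_int; apply/matrixP => i j; rewrite !mxE numqK. Qed.

(* [q] lies in the maximal ideal [pZ_(p)] of the local ring [Z_(p)]. *)
Definition in_pZp (p : nat) (q : rat) : Prop :=
  exists2 s : nat, ~~ (p %| s)%N & exists c : int, s%:R * q = p%:R * c%:~R.

Section PAdicRationals.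
Variable p : nat.
Hypothesis p_prime : prime p.

Lemma in_pZp0 : in_pZp p 0.
Proof. by exists 1%N; [rewrite dvdn1 neq_ltn prime_gt1 ?orbT | exists 0; rewrite !mulr0]. Qed.

Lemma in_pZpD q1 q2 : in_pZp p q1 -> in_pZp p q2 -> in_pZp p (q1 + q2).
Proof.
move=> [s1 ps1 [c1 e1]] [s2 ps2 [c2 e2]].
exists (s1 * s2)%N; first by rewrite Euclid_dvdM // negb_or ps1 ps2.
exists (c1 * s2%:Z + c2 * s1%:Z); rewrite natrM mulrDr.
have -> : (s1%:R * s2%:R * q1 : rat) = s2%:R * (s1%:R * q1) by ring.
have -> : (s1%:R * s2%:R * q2 : rat) = s1%:R * (s2%:R * q2) by ring.
by rewrite e1 e2 rmorphD !rmorphM /= !pmulrn; ring.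
Qed.

Lemma in_pZp_int q : q \is a Num.int -> in_pZp p q -> (p %| numq q)%Z.
Proof.
move=> q_int [s ps [c e]].
have /(congr1 numq) : ((s%:Z * numq q)%:~R : rat) = (p%:Z * c)%:~R.
  by rewrite !intrM numqK.
rewrite !numq_int => e'.
have cop : coprimez p s by rewrite coprimezE /= prime_coprime.
by rewrite -(Gauss_dvdzr _ cop) e' dvdz_mulr.
Qed.

Lemma in_pZp_of_logn (s a d : nat) (c : int) q : ~~ (p %| s)%N -> (0 < a)%N ->
  (logn p a < logn p d)%N -> (s * a)%:R * q = d%:R * c%:~R -> in_pZp p q.
Proof.
move=> ps a_gt0 lt_ad e.
have d_gt0 : (0 < d)%N by case: d lt_ad {e} => //; rewrite logn0.
have [a' pa' def_a] := pfactor_coprime p_prime a_gt0.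
have [d' _ def_d] := pfactor_coprime p_prime d_gt0.
set k := logn p a in def_a lt_ad; set t := (logn p d - k.+1)%N.
have def_e : logn p d = (k + 1 + t)%N by rewrite /t; lia.
exists (s * a')%N; first by rewrite Euclid_dvdM // negb_or ps -(prime_coprime a' p_prime) pa'.
exists ((d' * p ^ t)%:Z * c).
have pk_neq0 : ((p ^ k)%:R : rat) != 0 by rewrite pnatr_eq0 -lt0n expn_gt0 prime_gt0.
apply: (mulIf pk_neq0); transitivity ((s * a)%:R * q); first by rewrite def_a !natrM; ring.
by rewrite e def_d def_e intrM -pmulrn !natrM !natrX !exprD; ring.
Qed.

End PAdicRationals.

Lemma natr_ext_neq0 (K : fieldExtType rat) k : (0 < k)%N -> (k%:R : K) != 0.
Proof. by rewrite -(rmorph_nat (in_alg K)) fmorph_eq0 pnatr_eq0 -lt0n. Qed.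

Lemma scaler_invn (K : fieldExtType rat) k (x : K) : (k%:R^-1 : rat) *: x = x / k%:R.
Proof. by rewrite -(rmorph_nat (in_alg K)) -fmorphV /= mulr_algr. Qed.

Lemma one_sub_powE (T : pzRingType) (x : T) m :
  1 = x ^+ m + (1 - x) * \sum_(i < m) x ^+ i.
Proof. by rewrite -opprB mulNr -subrX1 opprB addrC subrK. Qed.

Section Order.
Variable K : fieldExtType rat.
Local Notation n := (\dim {:K}).
Variables (R : K -> Prop) (b : n.-tuple K).
Hypothesis b_basis : basis_of fullv b.
Hypothesis R_Zspan : forall x, R x <-> Zspan b x.
Hypothesis R1 : R 1.
Hypothesis RM : forall x y, R x -> R y -> R (x * y).

Lemma order_coordP x : R x <-> forall i, coord b i x \is a Num.int.
Proof.
rewrite R_Zspan; split => [[z ->] i | x_int].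
  under eq_bigr => j _ do rewrite (tnth_nth 0).
  by rewrite coord_sum_free ?(basis_free b_basis) // rpred_int.
exists (fun i => numq (coord b i x)).
rewrite {1}(coord_basis b_basis (memvf x)); apply: eq_bigr => i _.
by rewrite (tnth_nth 0) numqK.
Qed.

Lemma orderB x y : R x -> R y -> R (x - y).
Proof.
move=> /order_coordP Rx /order_coordP Ry.
by apply/order_coordP => i; rewrite linearB rpredB ?Rx ?Ry.
Qed.

Lemma order0 : R 0.
Proof. by rewrite -(subrr 1); apply: orderB. Qed.

Lemma orderD x y : R x -> R y -> R (x + y).
Proof. by move=> Rx Ry; rewrite -[y]opprK -[- y]add0r; do 2?apply: orderB => //; exact: order0. Qed.

Lemma orderMz x z : R x -> R (x *~ z).
Proof. by move=> /order_coordP Rx; apply/order_coordP => i; rewrite raddfMz rpredMz ?Rx. Qed.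

Lemma order_nat k : R k%:R.
Proof. by rewrite -mulrz_nat; apply: orderMz. Qed.

Lemma orderX x k : R x -> R (x ^+ k).
Proof. by move=> Rx; elim: k => [|k IHk]; rewrite ?expr0 // exprS; apply: RM. Qed.

Lemma order_basis (i : 'I_n) : R b`_i.
Proof.
by apply/order_coordP => j; rewrite coord_free ?(basis_free b_basis) //; case: (i == j).
Qed.

Lemma regmx_int x : R x -> forall i j, regmx b x i j \is a Num.int.
Proof. by move=> Rx i j; rewrite regmxE; move/order_coordP: (RM (order_basis i) Rx). Qed.

Lemma order_regmxP x : R x <-> forall i j, regmx b x i j \is a Num.int.
Proof.
split=> [|regx_int]; first exact: regmx_int.
apply/order_coordP => j; rewrite passmx.coord_rVof coord_regmx // mxE.
apply: rpred_sum => i _; rewrite mxE rpredM //.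
exact: (proj1 (order_coordP _) R1).
Qed.

Lemma trace_int x : R x -> trace x \is a Num.int.
Proof.
by move=> Rx; rewrite (trace_regmx b_basis); apply: rpred_sum => i _; apply: regmx_int.
Qed.

Lemma order_power_divisible (p : nat) r : prime p -> (n < p)%N -> R r ->
  (forall j, (0 < j)%N -> (p %| numq (trace (r ^+ j)))%Z) ->
  exists2 m, (0 < m)%N & R (r ^+ m / p%:R).
Proof.
move=> p_prime lt_np Rr p_dvd_tr.
pose A := map_mx numq (regmx b r).
have regmxXA j : regmx b (r ^+ j) = map_mx intr (A ^+ j).
  rewrite regmxX // rmorphXn; congr (_ ^+ _).
  by rewrite /A; symmetry; apply: map_mx_numqK; apply: regmx_int.
have trA j : (\tr (A ^+ j))%:~R = trace (r ^+ j).
  by rewrite (trace_regmx b_basis) regmxXA trace_map_mx.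
have [m m_gt0 Am0] : exists2 m, (0 < m)%N & map_mx (intr : int -> 'F_p) A ^+ m = 0.
  apply: (nilpotent_of_trace_powers (pchar_Fp p_prime) lt_np) => j j_gt0.
  rewrite -rmorphXn trace_map_mx; apply/eqP.
  by rewrite -(dvdz_pcharf (pchar_Fp p_prime)) -[\tr _]numq_int trA p_dvd_tr.
exists m => //; rewrite -scaler_invn; apply/order_regmxP => i k.
have /dvdzP[z Am_ik] : (p %| (A ^+ m) i k)%Z.
  move/matrixP/(_ i k): Am0; rewrite -rmorphXn !mxE => /eqP.
  by rewrite -(dvdz_pcharf (pchar_Fp p_prime)).
have p_neq0 : (p%:R : rat) != 0 by rewrite pnatr_eq0 -lt0n prime_gt0.
by rewrite linearZ /= regmxXA !mxE Am_ik intrM mulrCA mulVf ?mulr1 ?rpred_int.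
Qed.

Variable p : nat.
Hypothesis p_prime : prime p.
Local Notation Rp := (localize R p).

Lemma localize_order x : R x -> Rp x.
Proof.
move=> Rx; exists x, 1%N; split => //; last by rewrite divr1.
by rewrite dvdn1 neq_ltn prime_gt1 ?orbT.
Qed.

Lemma localize_nat k : Rp k%:R.
Proof. exact/localize_order/order_nat. Qed.

Lemma natr_neq0_coprime (s : nat) : ~~ (p %| s)%N -> (s%:R : K) != 0.
Proof. by case: s => [|s _]; rewrite ?dvdn0 // natr_ext_neq0. Qed.

Lemma localizeM x y : Rp x -> Rp y -> Rp (x * y).
Proof.
move=> [r1 [s1 [Rr1 ps1 ->]]] [r2 [s2 [Rr2 ps2 ->]]].
exists (r1 * r2), (s1 * s2)%N; split; first exact: RM.
  by rewrite Euclid_dvdM // negb_or ps1 ps2.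
by rewrite natrM invfM mulrACA.
Qed.

Lemma localizeD x y : Rp x -> Rp y -> Rp (x + y).
Proof.
move=> [r1 [s1 [Rr1 ps1 ->]]] [r2 [s2 [Rr2 ps2 ->]]].
exists (r1 * s2%:R + r2 * s1%:R), (s1 * s2)%N; split.
- by apply: orderD; apply: RM => //; apply: order_nat.
- by rewrite Euclid_dvdM // negb_or ps1 ps2.
- have s1_neq0 := natr_neq0_coprime ps1; have s2_neq0 := natr_neq0_coprime ps2.
  by rewrite natrM; field; rewrite s1_neq0 s2_neq0.
Qed.

Lemma localize_sum (I : finType) (F : I -> K) : (forall i, Rp (F i)) -> Rp (\sum_i F i).
Proof. by move=> RpF; apply: (big_ind Rp (localize_nat 0) localizeD). Qed.

Lemma localizeX x k : Rp x -> Rp (x ^+ k).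
Proof.
move=> Rpx; elim: k => [|k IHk]; first exact: (localize_nat 1).
by rewrite exprS; apply: localizeM.
Qed.

(* [R_p] meets [p^-1 R] in [R], as [p] is invertible modulo every denominator of [R_p]. *)
Lemma order_of_localize x : Rp x -> R (p%:R * x) -> R x.
Proof.
move=> [r [s [Rr ps ->]]] Rpx.
have s_neq0 := natr_neq0_coprime ps.
have cop : coprimez s p by rewrite coprimezE /= coprime_sym prime_coprime.
have [[u v] /= uv1] := coprimezP _ _ cop.
have uv1K : u%:~R * s%:R + v%:~R * p%:R = 1 :> K.
  by move/(congr1 (intr : int -> K)): uv1; rewrite rmorphD !rmorphM.
have -> : r / s%:R = r * u%:~R + p%:R * (r / s%:R) * v%:~R.
  transitivity (r / s%:R * (u%:~R * s%:R + v%:~R * p%:R)); first by rewrite uv1K mulr1.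
  by field.
by rewrite !mulrzr; apply: orderD; apply: orderMz.
Qed.

Lemma localize_power_in_pRp u : (n < p)%N -> Rp u ->
    (forall y, Rp y -> in_pZp p (trace (u * y))) ->
  exists m w, [/\ (0 < m)%N, Rp w & u ^+ m = p%:R * w].
Proof.
move=> lt_np [r [s [Rr ps def_u]]] tr_u.
have s_neq0 := natr_neq0_coprime ps.
have p_dvd_tr j : (0 < j)%N -> (p %| numq (trace (r ^+ j)))%Z.
  move=> j_gt0; apply: (in_pZp_int p_prime); first by apply: trace_int; apply: orderX.
  have -> : r ^+ j = u * (u ^+ j.-1 * s%:R ^+ j).
    by rewrite def_u mulrA -exprS prednK // -exprMn divfK.
  apply: tr_u; apply: localizeM; first by apply: localizeX; exists r, s.
  by rewrite -natrX; apply: localize_nat.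
have [m m_gt0 Rrm] := order_power_divisible p_prime lt_np Rr p_dvd_tr.
exists m, (r ^+ m / p%:R / (s ^ m)%:R); split => //.
  by exists (r ^+ m / p%:R), (s ^ m)%N; rewrite Euclid_dvdX // negb_and ps.
have p_neq0 : (p%:R : K) != 0 by rewrite natr_ext_neq0 ?prime_gt0.
by rewrite def_u exprMn exprVn natrX; field; rewrite expf_neq0.
Qed.

Lemma kills_divp (d a : nat) al w m : kills R d -> (p %| d)%N -> (p %| a)%N ->
    (forall t, trace_dual R t -> Rp (d%:R * t * al)) ->
    Rp (1 - a%:R * al) -> Rp w -> (1 - a%:R * al) ^+ m = p%:R * w ->
  kills R (d %/ p).
Proof.
move=> kill_d /dvdnP[D def_d] /dvdnP[A def_a] Rp_al Rp_u Rpw def_w; subst d a.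
rewrite mulnK ?prime_gt0 // => t Tt.
have := one_sub_powE (1 - (A * p)%:R * al) m; rewrite def_w subKr.
set S := \sum_(i < m) _ => one_eq.
apply: order_of_localize; last by rewrite mulrA -natrM mulnC; exact: kill_d t Tt.
have -> : D%:R * t = (D * p)%:R * t * w + A%:R * ((D * p)%:R * t * al) * S.
  transitivity (D%:R * t * (p%:R * w + (A * p)%:R * al * S)); first by rewrite -one_eq mulr1.
  by rewrite !natrM; ring.
apply: localizeD; first by apply: localizeM => //; apply: localize_order; exact: kill_d t Tt.
apply: localizeM; first by apply: localizeM; [apply: localize_nat | apply: Rp_al].
by apply: localize_sum => i; apply: localizeX.
Qed.

Lemma trace_dual0 : trace_dual R 0.
Proof. by move=> y _; rewrite mul0r trace0. Qed.

Lemma trace_dualMr t r : trace_dual R t -> R r -> trace_dual R (t * r).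
Proof. by move=> Tt Rr y Ry; rewrite -mulrA; apply/Tt/RM. Qed.

Section InvertibleDualPlus.
Variables (d a : nat) (J : K -> Prop).
Hypothesis a_gt0 : (0 < a)%N.
Hypothesis lt_logn_ad : (logn p a < logn p d)%N.
Hypothesis J_submodule : submodule Rp J.
Hypothesis IRpJ_eq : forall x, prod_set (prod_set (dual_plus R d a) Rp) J x <-> Rp x.
Local Notation I := (dual_plus R d a).

Definition adapted x := exists u al, [/\ x = d%:R * u + a%:R * al, Rp (d%:R * u),
  forall y, Rp y -> in_pZp p (trace (d%:R * u * y)) &
  forall t, trace_dual R t -> Rp (d%:R * t * al)].

Lemma dual_plus_mul_mem x z : I x -> J z -> Rp (x * z).
Proof.
move=> Ix Jz; apply/IRpJ_eq; exists 1%N, (fun=> x), (fun=> z); split => //.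
  move=> _; exists 1%N, (fun=> x), (fun=> 1); split => //.
    by move=> _; apply: localize_order.
  by rewrite big_ord1 mulr1.
by rewrite big_ord1.
Qed.

Lemma adapted0 : adapted 0.
Proof.
exists 0, 0; split; first by rewrite !mulr0 addr0.
- by rewrite mulr0; apply: localize_nat 0.
- by move=> y _; rewrite mulr0 mul0r trace0; apply: in_pZp0.
- by move=> t _; rewrite mulr0; apply: localize_nat 0.
Qed.

Lemma adaptedD x y : adapted x -> adapted y -> adapted (x + y).
Proof.
move=> [u1 [al1 [-> Rpu1 tr_u1 Rp_al1]]] [u2 [al2 [-> Rpu2 tr_u2 Rp_al2]]].
exists (u1 + u2), (al1 + al2); split.
- by rewrite !mulrDr addrACA.
- by rewrite mulrDr; apply: localizeD.
- move=> z Rpz; rewrite mulrDr mulrDl traceD.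
  by apply: (in_pZpD p_prime); [apply: tr_u1 | apply: tr_u2].
- by move=> t Tt; rewrite mulrDr; apply: localizeD; [apply: Rp_al1 | apply: Rp_al2].
Qed.

Lemma adapted_sum m (F : 'I_m -> K) : (forall i, adapted (F i)) -> adapted (\sum_i F i).
Proof. by move=> adF; apply: (big_ind adapted adapted0 adaptedD). Qed.

Lemma adapted_mul x z : I x -> J z -> adapted (x * z).
Proof.
move=> [u [rho [Tu Rrho ->]]] Jz.
have I_d t : trace_dual R t -> I (d%:R * t).
  by move=> Tt; exists t, 0; split => //; [apply: order0 | rewrite mulr0 addr0].
exists (u * z), (rho * z); split.
- by rewrite mulrDl !mulrA.
- by rewrite mulrA; apply: dual_plus_mul_mem => //; apply: I_d.
- move=> y Rpy.
  have /(localizeM Rpy) : Rp (a%:R * z).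
    apply: dual_plus_mul_mem => //.
    by exists 0, 1; split; [apply: trace_dual0 | apply: R1 | rewrite mulr0 add0r mulr1].
  move=> [r [s [Rr ps def_yaz]]].
  have def_r : r = y * (a%:R * z) * s%:R by rewrite def_yaz divfK ?natr_neq0_coprime.
  apply: (in_pZp_of_logn p_prime ps a_gt0 lt_logn_ad (c := numq (trace (u * r)))).
  rewrite numqK ?(Tu _ Rr) // -!trace_natrM; congr trace.
  by rewrite def_r natrM; ring.
- move=> t Tt; have -> : d%:R * t * (rho * z) = d%:R * (t * rho) * z by rewrite !mulrA.
  by apply: dual_plus_mul_mem => //; apply: I_d; apply: trace_dualMr.
Qed.

Lemma adapted1 : adapted 1.
Proof.
have /IRpJ_eq[m [c [z [IRp_c Jz ->]]]] := localize_order R1.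
apply: adapted_sum => i; have [k [x [y [Ix Rpy ->]]]] := IRp_c i.
rewrite mulr_suml; apply: adapted_sum => j; rewrite -mulrA.
by apply: adapted_mul => //; case: J_submodule => _ _; apply.
Qed.

End InvertibleDualPlus.

End Order.

Theorem proposition5p33 (K : fieldExtType rat) (R : K -> Prop) (n : nat)
  (d p a : nat) :
  full_order R n -> red_disc R d -> prime p -> (0 < a)%N ->
  (0 < logn p a)%N -> (logn p a < logn p d)%N ->
  invertible_at R p (dual_plus R d a) ->
  (p <= n)%N.
Proof.
move=> [R1 RM [b [b_basis R_Zspan]]] [d_gt0 kill_d d_min] p_prime a_gt0.
move=> logn_a_gt0 lt_logn_ad [J [J_submodule IRpJ_eq]].
have dim_n := size_basis b_basis; subst n.
rewrite leqNgt; apply/negP => lt_np.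
have [v [al [one_eq Rp_u tr_u Rp_al]]] :=
  adapted1 b_basis R_Zspan R1 RM p_prime a_gt0 lt_logn_ad J_submodule IRpJ_eq.
have def_u : d%:R * v = 1 - a%:R * al by apply/eqP; rewrite eq_sym subr_eq -one_eq.
rewrite def_u in Rp_u tr_u.
have [m [w [_ Rpw def_w]]] :=
  localize_power_in_pRp b_basis R_Zspan R1 RM p_prime lt_np Rp_u tr_u.
have p_dvd_a : (p %| a)%N by move: logn_a_gt0; rewrite logn_gt0 mem_primes => /and3P[].
have p_dvd_d : (p %| d)%N.
  by move: (ltn_trans logn_a_gt0 lt_logn_ad); rewrite logn_gt0 mem_primes => /and3P[].
have kill_dp := kills_divp b_basis R_Zspan R1 RM p_prime kill_d p_dvd_d p_dvd_a
  Rp_al Rp_u Rpw def_w.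
have dp_gt0 : (0 < d %/ p)%N by rewrite divn_gt0 ?prime_gt0 // dvdn_leq.
have := d_min _ dp_gt0 kill_dp.
by rewrite leqNgt ltn_Pdiv ?prime_gt1.
Qed.
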